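(* Let $\Gamma$ be a maximal consistent set of SBTrust, $\delta$ a propositional formula, and $(\Delta,\varphi,i)\in\mathit{max}([\delta]_\Gamma)$. Then (a) $\Delta$ is $\varphi$-likely for $\Gamma$; and (b) $\neg(\delta\to\varphi)\rightsquigarrow\bot\in\Gamma$.
   Context: $\mathcal{L}_T$: $\alpha::=\varphi\mid\varphi\rightsquigarrow\varphi\mid B(\alpha)\mid\alpha*\alpha\mid\neg\alpha$, with $\varphi$ ranging over classical propositional formulas (set $\mathcal{L}_{CL}$) and $*\in\{\land,\lor,\to,\leftrightarrow\}$. SBTrust is the Hilbert system ($\varphi,\psi,\chi,\varphi_i,\psi_i$ propositional; $\alpha,\beta\in\mathcal{L}_T$; rule outputs in $\mathcal{L}_T$): classical tautologies and Modus Ponens; $\varphi\rightsquigarrow\varphi$; $(\varphi\rightsquigarrow\bot)\to\neg\varphi$; $((\psi\land\chi)\rightsquigarrow\varphi)\to(\psi\rightsquigarrow(\chi\to\varphi))$; $(\neg(\varphi\leftrightarrow\psi)\rightsquigarrow\bot)\to((\varphi\rightsquigarrow\chi)\leftrightarrow(\psi\rightsquigarrow\chi))$; rule RCK: from $(\varphi_1\land\dots\land\varphi_n)\to\varphi_{n+1}$ infer $\bigwedge_{j\le n}(\psi\rightsquigarrow\varphi_j)\to(\psi\rightsquigarrow\varphi_{n+1})$; rule $\mathbf{S5_F}$: from $(\ell_1\land\dots\land\ell_n)\to\chi$ infer $(\ell_1\land\dots\land\ell_n)\to(\neg\chi\rightsquigarrow\bot)$, each $\ell_j$ being $\varphi_j\rightsquigarrow\psi_j$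 or its negation, $\chi$ propositional; $B(\alpha\to\beta)\to(B\alpha\to B\beta)$; $B\alpha\to\neg B\neg\alpha$; $B\alpha\to BB\alpha$; necessitation for $B$. A maximal consistent set (MCS) is $\Gamma\subseteq\mathcal{L}_T$ with $\Gamma\nvdash\bot$ and, for each $\alpha$, $\alpha\in\Gamma$ or $\neg\alpha\in\Gamma$. For MCSs, $\Gamma\leftrightsquigarrow\Delta$ iff they contain the same formulas of the form $\chi\rightsquigarrow\psi$; $[\Gamma]_\leftrightsquigarrow$ is the equivalence class. $\rightsquigarrow_\varphi(\Gamma)=\{\psi:\varphi\rightsquigarrow\psi\in\Gamma\}$, and $\Delta$ is $\varphi$-likely for $\Gamma$ if $\rightsquigarrow_\varphi(\Gamma)\subseteq\Delta$. Let $S_\Gamma=[\Gamma]_\leftrightsquigarrow\times\mathcal{L}_{CL}\times\{0,1,2\}$ and $[\delta]_\Gamma=\{(\Delta,\varphi,i)\in S_\Gamma:\delta\in\Delta\}$. Define $\succeq_\Gamma\subseteq S_\Gamma\times S_\Gamma$ by: $(\Delta,\varphi,i)\succeq_\Gamma(\Omega,\psi,j)$ iff ($\Delta$ is $\varphi$-likely for $\Gamma$ and $\varphi\in\Omega$) or ($i=1,j=0$) or ($i=2,j=1$) or ($i=0,j=2$). For $X\subseteq S_\Gamma$, $\mathit{max}(X)=\{x\in X:\forall y\in X\,(y\succeq_\Gamma x\Rightarrow x\succeq_\Gamma y)\}$. *)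

From Stdlib Require Import List Bool.
Import ListNotations.

Inductive pform : Type :=
| PAtom : nat -> pform
| PBot : pform
| PNeg : pform -> pform
| PAnd : pform -> pform -> pform
| POr : pform -> pform -> pform
| PImp : pform -> pform -> pform
| PIff : pform -> pform -> pform.

Definition PTop : pform := PNeg PBot.

Fixpoint pbigand (l : list pform) : pform :=
  match l with [] => PTop | x :: xs => PAnd x (pbigand xs) end.

Fixpoint peval (v : nat -> bool) (f : pform) : bool :=
  match f with
  | PAtom n => v n
  | PBot => false
  | PNeg a => negb (peval v a)
  | PAnd a b => peval v a && peval v b
  | POr a b => peval v a || peval v b
  | PImp a b => implb (peval v a) (peval v b)
  | PIff a b => eqb (peval v a) (peval v b)
  end.

Inductive tform : Type :=
| TProp : pform -> tform
| TCond : pform -> pform -> tform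
| TB : tform -> tform
| TAnd : tform -> tform -> tform
| TOr : tform -> tform -> tform
| TImp : tform -> tform -> tform
| TIff : tform -> tform -> tform
| TNeg : tform -> tform.

Definition TBot : tform := TProp PBot.
Definition TTop : tform := TNeg TBot.

Fixpoint tbigand (l : list tform) : tform :=
  match l with [] => TTop | x :: xs => TAnd x (tbigand xs) end.

(** Classical (propositional) tautologies of L_T: true under every boolean
    valuation of propositional atoms, of ~>-formulas and of B-formulas. *)
Fixpoint teval (va : nat -> bool) (vc : pform -> pform -> bool)
  (vb : tform -> bool) (a : tform) : bool :=
  match a with
  | TProp f => peval va f
  | TCond f g => vc f g
  | TB b => vb b
  | TAnd x y => teval va vc vb x && teval va vc vb y
  | TOr x y => teval va vc vb x || teval va vc vb y
  | TImp x y => implb (teval va vc vb x) (teval va vc vb y)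
  | TIff x y => eqb (teval va vc vb x) (teval va vc vb y)
  | TNeg x => negb (teval va vc vb x)
  end.

Definition tautology (a : tform) : Prop :=
  forall va vc vb, teval va vc vb a = true.

Definition cond_literal (l : tform) : Prop :=
  exists f g, l = TCond f g \/ l = TNeg (TCond f g).

Inductive thm : tform -> Prop :=
| Ax_taut : forall a, tautology a -> thm a
| R_MP : forall a b, thm (TImp a b) -> thm a -> thm b
| Ax_id : forall f, thm (TCond f f)
| Ax_bot : forall f, thm (TImp (TCond f PBot) (TNeg (TProp f)))
| Ax_and : forall f g h,
    thm (TImp (TCond (PAnd g h) f) (TCond g (PImp h f)))
| Ax_eq : forall f g h,
    thm (TImp (TCond (PNeg (PIff f g)) PBot)
              (TIff (TCond f h) (TCond g h)))
| R_RCK : forall (l : list pform) (f g : pform),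
    thm (TProp (PImp (pbigand l) f)) ->
    thm (TImp (tbigand (map (fun x => TCond g x) l)) (TCond g f))
| R_S5F : forall (l : list tform) (c : pform),
    Forall cond_literal l ->
    thm (TImp (tbigand l) (TProp c)) ->
    thm (TImp (tbigand l) (TCond (PNeg c) PBot))
| Ax_K : forall a b, thm (TImp (TB (TImp a b)) (TImp (TB a) (TB b)))
| Ax_D : forall a, thm (TImp (TB a) (TNeg (TB (TNeg a))))
| Ax_4 : forall a, thm (TImp (TB a) (TB (TB a)))
| R_Nec : forall a, thm a -> thm (TB a).

(** Derivability from a set of premises (premises closed under MP only). *)
Inductive derives (G : tform -> Prop) : tform -> Prop :=
| D_hyp : forall a, G a -> derives G a
| D_thm : forall a, thm a -> derives G a
| D_MP : forall a b, derives G (TImp a b) -> derives G a -> derives G b.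

Definition MCS (G : tform -> Prop) : Prop :=
  ~ derives G TBot /\ forall a, G a \/ G (TNeg a).

Definition cond_equiv (G D : tform -> Prop) : Prop :=
  forall f g, G (TCond f g) <-> D (TCond f g).

Definition likely (G : tform -> Prop) (f : pform) (D : tform -> Prop) : Prop :=
  forall g, G (TCond f g) -> D (TProp g).

Definition state : Type := ((tform -> Prop) * pform * nat)%type.

Definition in_S (G : tform -> Prop) (x : state) : Prop :=
  let '(D, _, i) := x in MCS D /\ cond_equiv G D /\ i < 3.

Definition trset (G : tform -> Prop) (d : pform) (x : state) : Prop :=
  in_S G x /\ let '(D, _, _) := x in D (TProp d).

Definition sgeq (G : tform -> Prop) (x y : state) : Prop :=
  let '(D, f, i) := x in
  let '(Om, _, j) := y in
  (likely G f D /\ Om (TProp f))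
  \/ (i = 1 /\ j = 0) \/ (i = 2 /\ j = 1) \/ (i = 0 /\ j = 2).

Definition maxset (G : tform -> Prop) (X : state -> Prop) (x : state) : Prop :=
  X x /\ forall y, X y -> sgeq G y x -> sgeq G x y.

From Stdlib Require Import List Bool Classical Lia.
Import ListNotations.

(** Part (a): from a maximal [(D, f, i)] the cyclic successor [(D, f, i+1 mod 3)]
    lies above it, so by maximality [(D, f, i)] lies above its successor; the
    index clauses of the preorder only go from [i+1] to [i], hence the likelihood
    clause must hold.  Part (b): if [(¬(d → f) ~> ⊥)] is not in [Γ], rule S5_F
    makes the ~>-literals of [Γ] together with [d] and [¬f] consistent; a
    Lindenbaum extension [O] of this set has the same ~>-formulas as [Γ], so
    [(O, f, i+1 mod 3)] is in [[d]_Γ] and above [(D, f, i)].  Maximality then forces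
    [f ∈ O], contradicting [¬f ∈ O]. *)

Ltac taut :=
  apply Ax_taut; intros va vc vb; unfold TBot, TTop; cbn;
  repeat match goal with
         | |- context [teval ?x ?y ?z ?w] => destruct (teval x y z w)
         | |- context [peval ?v ?p] => destruct (peval v p)
         end;
  reflexivity.

Definition incl_set (X Y : tform -> Prop) : Prop := forall x, X x -> Y x.

Definition adjoin (X : tform -> Prop) (a : tform) : tform -> Prop :=
  fun x => X x \/ x = a.

Definition consistent (X : tform -> Prop) : Prop := ~ derives X TBot.

Lemma derives_incl X Y b : incl_set X Y -> derives X b -> derives Y b.
Proof.
  intros HXY Hb; induction Hb.
  - apply D_hyp; auto.
  - apply D_thm; auto.
  - eapply D_MP; eauto.
Qed.

Lemma consistent_incl X Y : incl_set X Y -> consistent Y -> consistent X.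
Proof. intros HXY HY Hbot; apply HY; exact (derives_incl X Y TBot HXY Hbot). Qed.

Lemma derives_thm_mp X a b : thm (TImp a b) -> derives X a -> derives X b.
Proof. intros Hab Ha; exact (D_MP X a b (D_thm X _ Hab) Ha). Qed.

Lemma derives_thm_mp2 X a b c :
  thm (TImp a (TImp b c)) -> derives X a -> derives X b -> derives X c.
Proof. intros Habc Ha Hb; exact (D_MP X b c (derives_thm_mp X _ _ Habc Ha) Hb). Qed.

Lemma deduction X a b : derives (adjoin X a) b -> derives X (TImp a b).
Proof.
  induction 1 as [x [Hx | ->] | x Hx | x y _ IHxy _ IHx].
  - apply (derives_thm_mp X x); [taut | apply D_hyp; exact Hx].
  - apply D_thm; taut.
  - apply (derives_thm_mp X x); [taut | apply D_thm; exact Hx].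
  - apply (derives_thm_mp2 X (TImp a (TImp x y)) (TImp a x)); [taut | exact IHxy | exact IHx].
Qed.

Lemma mcs_derives_closed G a : MCS G -> derives G a -> G a.
Proof.
  intros [Hcons Hmax] Ha; destruct (Hmax a) as [H | Hneg]; [exact H |].
  exfalso; apply Hcons.
  apply (derives_thm_mp2 G (TNeg a) a); [taut | apply D_hyp; exact Hneg | exact Ha].
Qed.

Lemma mcs_thm_mp G a b : MCS G -> thm (TImp a b) -> G a -> G b.
Proof.
  intros HG Hab Ha; apply mcs_derives_closed; [exact HG |].
  exact (derives_thm_mp G a b Hab (D_hyp G a Ha)).
Qed.

Lemma mcs_not_both G a : MCS G -> G (TNeg a) -> ~ G a.
Proof.
  intros [Hcons _] Hneg Ha; apply Hcons.
  apply (derives_thm_mp2 G (TNeg a) a); [taut | apply D_hyp; exact Hneg | apply D_hyp; exact Ha].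
Qed.

Lemma mcs_tbigand G l : MCS G -> Forall G l -> G (tbigand l).
Proof.
  intros HG; induction 1 as [| a l Ha _ IH]; cbn.
  - apply mcs_derives_closed; [exact HG | apply D_thm; taut].
  - apply mcs_derives_closed; [exact HG |].
    apply (derives_thm_mp2 G a (tbigand l)); [taut | apply D_hyp; exact Ha | apply D_hyp; exact IH].
Qed.

Lemma teval_tbigand_app va vc vb l1 l2 :
  teval va vc vb (tbigand (l1 ++ l2))
  = teval va vc vb (tbigand l1) && teval va vc vb (tbigand l2).
Proof. induction l1 as [| a l1 IH]; cbn; [reflexivity |]; rewrite IH, andb_assoc; reflexivity. Qed.

Lemma thm_tbigand_app l1 l2 :
  thm (TImp (tbigand (l1 ++ l2)) (TAnd (tbigand l1) (tbigand l2))).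
Proof.
  apply Ax_taut; intros va vc vb; cbn [teval]; rewrite teval_tbigand_app.
  destruct (teval va vc vb (tbigand l1)), (teval va vc vb (tbigand l2)); reflexivity.
Qed.

Lemma derives_finite_premises X b :
  derives X b -> exists l, Forall X l /\ thm (TImp (tbigand l) b).
Proof.
  induction 1 as [a Ha | a Ha | a b _ [l1 [HX1 Hab]] _ [l2 [HX2 Ha]]].
  - exists [a]; split; [constructor; auto | taut].
  - exists []; split; [constructor | apply (R_MP a); [taut | exact Ha]].
  - exists (l1 ++ l2); split; [apply Forall_app; auto |].
    assert (Hcomb : thm (TImp (TImp (tbigand (l1 ++ l2)) (TAnd (tbigand l1) (tbigand l2)))
                      (TImp (TImp (tbigand l1) (TImp a b))
                         (TImp (TImp (tbigand l2) a) (TImp (tbigand (l1 ++ l2)) b)))))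
      by taut.
    exact (R_MP _ _ (R_MP _ _ (R_MP _ _ Hcomb (thm_tbigand_app l1 l2)) Hab) Ha).
Qed.

Definition pairs {A B : Type} (c : A -> A -> B) (l : list A) : list B :=
  map (fun p => c (fst p) (snd p)) (list_prod l l).

Lemma in_pairs {A B : Type} (L : nat -> list A) (c : A -> A -> B) n1 n2 a b :
  (forall n m x, n <= m -> In x (L n) -> In x (L m)) ->
  In a (L n1) -> In b (L n2) -> In (c a b) (pairs c (L (Nat.max n1 n2))).
Proof.
  intros Hmono Ha Hb; apply in_map_iff; exists (a, b); split; [reflexivity |].
  apply in_prod; [apply (Hmono n1) | apply (Hmono n2)]; auto; lia.
Qed.

Fixpoint pform_level (n : nat) : list pform :=
  match n with
  | 0 => [PBot]
  | S k => PAtom k :: pform_level k ++ map PNeg (pform_level k)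
           ++ pairs PAnd (pform_level k) ++ pairs POr (pform_level k)
           ++ pairs PImp (pform_level k) ++ pairs PIff (pform_level k)
  end.

Fixpoint tform_level (n : nat) : list tform :=
  match n with
  | 0 => []
  | S k => tform_level k ++ map TProp (pform_level k) ++ pairs TCond (pform_level k)
           ++ map TB (tform_level k) ++ map TNeg (tform_level k)
           ++ pairs TAnd (tform_level k) ++ pairs TOr (tform_level k)
           ++ pairs TImp (tform_level k) ++ pairs TIff (tform_level k)
  end.

Lemma pform_level_mono n m p : n <= m -> In p (pform_level n) -> In p (pform_level m).
Proof. induction 1; [auto |]; intros Hp; right; apply in_or_app; auto. Qed.

Lemma tform_level_mono n m a : n <= m -> In a (tform_level n) -> In a (tform_level m).
Proof. induction 1; [auto |]; intros Ha; apply in_or_app; auto. Qed.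

Lemma pform_level_exhaustive p : exists n, In p (pform_level n).
Proof.
  induction p as [k | | p [n Hp] | p [n1 Hp] q [n2 Hq] | p [n1 Hp] q [n2 Hq]
                 | p [n1 Hp] q [n2 Hq] | p [n1 Hp] q [n2 Hq]].
  - exists (S k); left; reflexivity.
  - exists 0; left; reflexivity.
  - exists (S n); pose proof (in_map PNeg _ _ Hp).
    right; rewrite !in_app_iff; tauto.
  - exists (S (Nat.max n1 n2)); pose proof (in_pairs _ PAnd _ _ _ _ pform_level_mono Hp Hq).
    right; rewrite !in_app_iff; tauto.
  - exists (S (Nat.max n1 n2)); pose proof (in_pairs _ POr _ _ _ _ pform_level_mono Hp Hq).
    right; rewrite !in_app_iff; tauto.
  - exists (S (Nat.max n1 n2)); pose proof (in_pairs _ PImp _ _ _ _ pform_level_mono Hp Hq).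
    right; rewrite !in_app_iff; tauto.
  - exists (S (Nat.max n1 n2)); pose proof (in_pairs _ PIff _ _ _ _ pform_level_mono Hp Hq).
    right; rewrite !in_app_iff; tauto.
Qed.

Lemma tform_level_exhaustive a : exists n, In a (tform_level n).
Proof.
  induction a as [p | p q | a [n Ha] | a [n1 Ha] b [n2 Hb] | a [n1 Ha] b [n2 Hb]
                 | a [n1 Ha] b [n2 Hb] | a [n1 Ha] b [n2 Hb] | a [n Ha]].
  - destruct (pform_level_exhaustive p) as [n Hp].
    exists (S n); pose proof (in_map TProp _ _ Hp).
    cbn [tform_level]; rewrite !in_app_iff; tauto.
  - destruct (pform_level_exhaustive p) as [n1 Hp], (pform_level_exhaustive q) as [n2 Hq].
    exists (S (Nat.max n1 n2)); pose proof (in_pairs _ TCond _ _ _ _ pform_level_mono Hp Hq).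
    cbn [tform_level]; rewrite !in_app_iff; tauto.
  - exists (S n); pose proof (in_map TB _ _ Ha).
    cbn [tform_level]; rewrite !in_app_iff; tauto.
  - exists (S (Nat.max n1 n2)); pose proof (in_pairs _ TAnd _ _ _ _ tform_level_mono Ha Hb).
    cbn [tform_level]; rewrite !in_app_iff; tauto.
  - exists (S (Nat.max n1 n2)); pose proof (in_pairs _ TOr _ _ _ _ tform_level_mono Ha Hb).
    cbn [tform_level]; rewrite !in_app_iff; tauto.
  - exists (S (Nat.max n1 n2)); pose proof (in_pairs _ TImp _ _ _ _ tform_level_mono Ha Hb).
    cbn [tform_level]; rewrite !in_app_iff; tauto.
  - exists (S (Nat.max n1 n2)); pose proof (in_pairs _ TIff _ _ _ _ tform_level_mono Ha Hb).
    cbn [tform_level]; rewrite !in_app_iff; tauto.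
  - exists (S n); pose proof (in_map TNeg _ _ Ha).
    cbn [tform_level]; rewrite !in_app_iff; tauto.
Qed.

Lemma consistent_adjoin_or_neg X a :
  consistent X -> consistent (adjoin X a) \/ consistent (adjoin X (TNeg a)).
Proof.
  intros HX; apply NNPP; intros Hboth; apply not_or_and in Hboth as [Ha Hna].
  apply NNPP, deduction in Ha; apply NNPP, deduction in Hna.
  apply HX; apply (derives_thm_mp2 X (TImp a TBot) (TImp (TNeg a) TBot)); [taut | exact Ha | exact Hna].
Qed.

Definition settle (X : tform -> Prop) (a : tform) : tform -> Prop := fun x =>
  X x \/ (x = a /\ consistent (adjoin X a)) \/ (x = TNeg a /\ ~ consistent (adjoin X a)).

Lemma settle_incl X a : incl_set X (settle X a).
Proof. intros x Hx; left; exact Hx. Qed.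

Lemma settle_consistent X a : consistent X -> consistent (settle X a).
Proof.
  intros HX; destruct (classic (consistent (adjoin X a))) as [Ha | Ha].
  - apply (consistent_incl _ (adjoin X a)); [| exact Ha].
    intros x [Hx | [[-> _] | [_ Hna]]]; [left; exact Hx | right; reflexivity | contradiction].
  - apply (consistent_incl _ (adjoin X (TNeg a))).
    + intros x [Hx | [[_ Ha'] | [-> _]]]; [left; exact Hx | contradiction | right; reflexivity].
    + destruct (consistent_adjoin_or_neg X a HX); [contradiction | assumption].
Qed.

Lemma settle_decides X a : settle X a a \/ settle X a (TNeg a).
Proof.
  destruct (classic (consistent (adjoin X a))).
  - left; right; left; auto.
  - right; right; right; auto.
Qed.

Definition settle_list (X : tform -> Prop) (l : list tform) : tform -> Prop :=
  fold_left settle l X.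

Lemma settle_list_incl l : forall X, incl_set X (settle_list X l).
Proof.
  induction l as [| a l IH]; intros X x Hx; cbn; [exact Hx |].
  apply IH, settle_incl, Hx.
Qed.

Lemma settle_list_consistent l : forall X, consistent X -> consistent (settle_list X l).
Proof. induction l as [| a l IH]; intros X HX; cbn; [exact HX |]; apply IH, settle_consistent, HX. Qed.

Lemma settle_list_decides l : forall X a,
  In a l -> settle_list X l a \/ settle_list X l (TNeg a).
Proof.
  induction l as [| b l IH]; intros X a Hin; [destruct Hin |].
  destruct Hin as [<- | Hin]; [| apply IH, Hin].
  destruct (settle_decides X b); [left | right]; apply (settle_list_incl l (settle X b)); assumption.
Qed.

Fixpoint lindenbaum_chain (X : tform -> Prop) (n : nat) : tform -> Prop :=
  match n with
  | 0 => X
  | S k => settle_list (lindenbaum_chain X k) (tform_level k)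
  end.

Lemma lindenbaum_chain_mono X n m :
  n <= m -> incl_set (lindenbaum_chain X n) (lindenbaum_chain X m).
Proof. induction 1 as [| m _ IH]; intros x Hx; [exact Hx |]; apply settle_list_incl, IH, Hx. Qed.

Lemma lindenbaum_chain_consistent X n : consistent X -> consistent (lindenbaum_chain X n).
Proof. intros HX; induction n as [| n IH]; cbn; [exact HX | apply settle_list_consistent, IH]. Qed.

Lemma derives_increasing_union (C : nat -> tform -> Prop) b :
  (forall n m, n <= m -> incl_set (C n) (C m)) ->
  derives (fun x => exists n, C n x) b -> exists n, derives (C n) b.
Proof.
  intros Hmono; induction 1 as [a [n Ha] | a Ha | a b _ [n1 Hab] _ [n2 Ha]].
  - exists n; apply D_hyp; exact Ha.
  - exists 0; apply D_thm; exact Ha.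
  - exists (Nat.max n1 n2); apply (D_MP _ a).
    + apply (derives_incl (C n1)); [apply Hmono; lia | exact Hab].
    + apply (derives_incl (C n2)); [apply Hmono; lia | exact Ha].
Qed.

Theorem lindenbaum X : consistent X -> exists O, MCS O /\ incl_set X O.
Proof.
  intros HX; exists (fun x => exists n, lindenbaum_chain X n x); split; [split |].
  - intros Hbot.
    destruct (derives_increasing_union _ _ (lindenbaum_chain_mono X) Hbot) as [n Hn].
    exact (lindenbaum_chain_consistent X n HX Hn).
  - intros a; destruct (tform_level_exhaustive a) as [k Hk].
    destruct (settle_list_decides _ (lindenbaum_chain X k) a Hk); [left | right];
      exists (S k); assumption.
  - intros x Hx; exists 0; exact Hx.
Qed.

Definition cond_part (G : tform -> Prop) : tform -> Prop :=
  fun x => cond_literal x /\ G x.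

Lemma mcs_S5F G c :
  MCS G -> derives (cond_part G) (TProp c) -> G (TCond (PNeg c) PBot).
Proof.
  intros HG Hc; apply derives_finite_premises in Hc as [l [Hl Hthm]].
  apply (mcs_thm_mp G (tbigand l) _ HG).
  - apply R_S5F; [| exact Hthm].
    eapply Forall_impl; [| exact Hl]; intros x [Hx _]; exact Hx.
  - apply (mcs_tbigand G l HG).
    eapply Forall_impl; [| exact Hl]; intros x [_ Hx]; exact Hx.
Qed.

Lemma cond_equiv_of_cond_part_incl G O :
  MCS G -> MCS O -> incl_set (cond_part G) O -> cond_equiv G O.
Proof.
  intros HG HO Hincl f g; split; intros Hfg.
  - apply Hincl; split; [exists f, g; left; reflexivity | exact Hfg].
  - destruct (proj2 HG (TCond f g)) as [H | Hneg]; [exact H | exfalso].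
    apply (mcs_not_both O (TCond f g) HO); [| exact Hfg].
    apply Hincl; split; [exists f, g; right; reflexivity | exact Hneg].
Qed.

Lemma cond_equiv_mcs_refuting G d f :
  MCS G -> ~ G (TCond (PNeg (PImp d f)) PBot) ->
  exists O, MCS O /\ cond_equiv G O /\ O (TProp d) /\ O (TNeg (TProp f)).
Proof.
  intros HG Hn.
  set (X := adjoin (adjoin (cond_part G) (TProp d)) (TNeg (TProp f))).
  assert (HX : consistent X).
  { intros Hbot; apply Hn, mcs_S5F; [exact HG |].
    apply deduction, deduction in Hbot.
    apply (derives_thm_mp _ (TImp (TProp d) (TImp (TNeg (TProp f)) TBot))); [taut | exact Hbot]. }
  destruct (lindenbaum X HX) as [O [HO Hincl]].
  exists O; split; [exact HO | split; [| split]].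
  - apply cond_equiv_of_cond_part_incl; [exact HG | exact HO |].
    intros x Hx; apply Hincl; left; left; exact Hx.
  - apply Hincl; left; right; reflexivity.
  - apply Hincl; right; reflexivity.
Qed.

Definition succ3 (i : nat) : nat := match i with 0 => 1 | 1 => 2 | _ => 0 end.

Lemma succ3_lt_3 i : succ3 i < 3.
Proof. destruct i as [| [| ]]; cbn; lia. Qed.

Lemma sgeq_succ3 G D Om f g i : i < 3 -> sgeq G (Om, g, succ3 i) (D, f, i).
Proof. intros Hi; destruct i as [| [| [| i]]]; cbn; auto; lia. Qed.

Lemma sgeq_to_succ3 G D Om f g i :
  sgeq G (D, f, i) (Om, g, succ3 i) -> likely G f D /\ Om (TProp f).
Proof. destruct i as [| [| [| i]]]; cbn; intros [H | H]; auto; lia. Qed.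

Lemma maxset_trset_succ3 G d D f i Om :
  maxset G (trset G d) (D, f, i) -> MCS Om -> cond_equiv G Om -> Om (TProp d) ->
  likely G f D /\ Om (TProp f).
Proof.
  intros [[[_ [_ Hi]] _] Hmax] HOm HGOm HOmd.
  apply (sgeq_to_succ3 G D Om f f i), Hmax.
  - split; [split; [exact HOm | split; [exact HGOm | apply succ3_lt_3]] | exact HOmd].
  - exact (sgeq_succ3 G D Om f f i Hi).
Qed.

Theorem lemma2 (G : tform -> Prop) (d : pform)
  (D : tform -> Prop) (f : pform) (i : nat) :
  MCS G ->
  maxset G (trset G d) (D, f, i) ->
  likely G f D /\ G (TCond (PNeg (PImp d f)) PBot).
Proof.
  intros HG Hmax; pose proof Hmax as [[[HD [HGD _]] Hd] _].
  split.
  - exact (proj1 (maxset_trset_succ3 G d D f i D Hmax HD HGD Hd)).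
  - apply NNPP; intros Hn.
    destruct (cond_equiv_mcs_refuting G d f HG Hn) as (O & HO & HGO & HOd & HOnf).
    destruct (maxset_trset_succ3 G d D f i O Hmax HO HGO HOd) as [_ HOf].
    exact (mcs_not_both O (TProp f) HO HOnf HOf).
Qed.
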